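(* (1) Let $K\ge2$ and $N>K$, and let $F\in\mathcal F_K$ have (at least) two identical columns. Then there are $Q^1,Q^2\in\mathcal Q_K^{\mathrm{ua}}$ with $FQ^1=FQ^2$ but $(F,Q^1)\not\sim(F,Q^2)$. (2) Let $K\ge2$ and $N\ge1$, and let $Q\in\mathcal Q_K\setminus\mathcal Q_K^{\mathrm{ua}}$ be such that every column of $Q$ is of the form $e_j$ for some $j$, but for some $k$, $e_k$ is not a column of $Q$. Then for every $F\in\mathcal F_K^{\mathrm d}$ there is $F^2\in\mathcal F_K^{\mathrm d}$ with $FQ=F^2Q$ but $(F,Q)\not\sim(F^2,Q)$.
   Context: Fix positive integers $M$ and $N$. For a positive integer $K$, $\mathcal F_K$ is the set of real $M\times K$ matrices with all entries in $[0,1]$, and $\mathcal Q_K$ is the set of real $K\times N$ matrices with entries in $[0,1]$ each of whose columns sums to $1$. $e_k$ is the $k$-th standard basis vector of $\mathbb R^K$. $\mathcal F_K^{\mathrm d}$ is the set of $F\in\mathcal F_K$ whose columns are mutually different. $\mathcal Q_K^{\mathrm{ua}}$ is the set of $Q\in\mathcal Q_K$ such that every column equals some $e_j$ and every $e_j$, $j\in\{1,\dots,K\}$, occurs as a column. $(F^1,Q^1)\sim(F^2,Q^2)$ means $F^1,F^2$ have the same number $K$ of columns and there is a permutation $\pi$ of $\{1,\dots,K\}$ with $F^2_{sk}=F^1_{s\pi(k)}$ and $Q^2_{ki}=Q^1_{\pi(k)i}$ for all $s,k,i$. *)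

From HB Require Import structures.
From mathcomp Require Import all_boot all_order all_fingroup all_algebra.
From mathcomp Require Import reals.
Set Implicit Arguments. Unset Strict Implicit. Unset Printing Implicit Defensive.
Import Order.TTheory GRing.Theory Num.Theory.
Local Open Scope ring_scope.

Section Defs.
Variable R : realType.

Definition inF (M K : nat) (F : 'M[R]_(M, K)) : Prop :=
  forall s k, 0 <= F s k <= 1.

Definition inQ (K N : nat) (Q : 'M[R]_(K, N)) : Prop :=
  (forall k i, 0 <= Q k i <= 1) /\ (forall i, \sum_(k < K) Q k i = 1).

Definition e_vec (K : nat) (j : 'I_K) : 'cV[R]_K := \col_(k < K) (k == j)%:R.

Definition inFd (M K : nat) (F : 'M[R]_(M, K)) : Prop :=
  inF F /\ forall k l : 'I_K, col k F = col l F -> k = l.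

Definition cols_basis (K N : nat) (Q : 'M[R]_(K, N)) : Prop :=
  forall i : 'I_N, exists j : 'I_K, col i Q = e_vec j.

Definition inQua (K N : nat) (Q : 'M[R]_(K, N)) : Prop :=
  inQ Q /\ cols_basis Q /\ (forall j : 'I_K, exists i : 'I_N, col i Q = e_vec j).

Definition equivFQ (M K N : nat) (F1 : 'M[R]_(M, K)) (Q1 : 'M[R]_(K, N))
  (F2 : 'M[R]_(M, K)) (Q2 : 'M[R]_(K, N)) : Prop :=
  exists pi : 'S_K,
    (forall s k, F2 s k = F1 s (pi k)) /\ (forall k i, Q2 k i = Q1 (pi k) i).

End Defs.
Arguments e_vec {R K} j.

From HB Require Import structures.
From mathcomp Require Import all_boot all_order all_fingroup all_algebra.
From mathcomp Require Import reals.
Set Implicit Arguments. Unset Strict Implicit. Unset Printing Implicit Defensive.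
Import Order.TTheory GRing.Theory Num.Theory.
Local Open Scope ring_scope.

(* (1) If columns k != l of F coincide, let Q1 and Q2 assign the first K
   observations to themselves and all the others to k, resp. to l.  Then
   F Q1 = F Q2, while a relabelling pi with Q2 = pi Q1 must fix each of the
   first K labels, hence be the identity, which fails at observation K.
   (2) If e_k is not a column of Q, row k of Q vanishes, so column k of F is
   invisible in F Q.  Replace it by a constant v in [0, 1] that is no entry of
   the first row of F: the columns stay distinct, and no relabelling of F can
   produce v in that row. *)

Section SetCol.
Variable R : pzRingType.

Definition setcol (M K : nat) (F : 'M[R]_(M, K)) (k : 'I_K) (v : R) :=
  \matrix_(s, j) if j == k then v else F s j.

Lemma mulmx_setcol (M K N : nat) (F : 'M[R]_(M, K)) (Q : 'M[R]_(K, N)) k v :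
  (forall i, Q k i = 0) -> setcol F k v *m Q = F *m Q.
Proof.
move=> Qk0; apply/matrixP => s i; rewrite !mxE; apply: eq_bigr => j _.
by rewrite mxE; case: eqP => // ->; rewrite Qk0 !mulr0.
Qed.

End SetCol.

Section Avoid.
Variable R : numFieldType.

Lemma exists_unit_interval_avoid (T : finType) (f : T -> R) :
  exists2 v : R, 0 <= v <= 1 & forall x, f x != v.
Proof.
(* Pigeonhole: #|T|.+1 distinct values 1/(t+1) cannot all be values of f. *)
pose cand := [seq (t.+1%:R)^-1 : R | t <- iota 0 #|T|.+1].
have cand_uniq : uniq cand.
  rewrite map_inj_uniq ?iota_uniq // => m n /invr_inj /eqP.
  by rewrite eqr_nat eqSS => /eqP.
have : ~~ all (mem (codom f)) cand.
  apply/negP => /allP sub_codom.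
  have := uniq_leq_size cand_uniq sub_codom.
  by rewrite size_codom size_map size_iota ltnn.
case/allPn => _ /mapP[t _ ->] t_notin; exists (t.+1%:R)^-1.
  by rewrite invr_ge0 ler0n invf_le1 ?ltr0Sn // (ler_nat R 1).
by move=> x; apply: contraNneq t_notin => <-; exact: codom_f.
Qed.

End Avoid.

Section Identifiability.
Variable R : realType.

Lemma col_e_vecE (K N : nat) (Q : 'M[R]_(K, N)) i j :
  col i Q = e_vec j -> forall k, Q k i = (k == j)%:R.
Proof. by move=> /matrixP Qi k; have := Qi k ord0; rewrite !mxE. Qed.

Lemma cols_basis_inQ (K N : nat) (Q : 'M[R]_(K, N)) : cols_basis Q -> inQ Q.
Proof.
move=> Qbasis; split=> [k i|i]; have [j /col_e_vecE Qi] := Qbasis i.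
  by rewrite Qi; case: (k == j); rewrite ?lexx ?ler01.
by rewrite (bigD1 j) //= Qi eqxx big1 ?addr0 // => k /negbTE kj; rewrite Qi kj.
Qed.

Lemma missing_basis_row_eq0 (K N : nat) (Q : 'M[R]_(K, N)) k :
  cols_basis Q -> (forall i, col i Q != e_vec k) -> forall i, Q k i = 0.
Proof.
move=> Qbasis Qk i; have [j Qi] := Qbasis i; rewrite (col_e_vecE Qi).
by case: eqP => // kj; move: (Qk i); rewrite Qi kj eqxx.
Qed.

Lemma col_colsub1 (K N : nat) (g : 'I_N -> 'I_K) i :
  col i (colsub g 1%:M) = e_vec (g i) :> 'cV[R]_K.
Proof. by apply/matrixP => k l; rewrite !mxE. Qed.

Lemma colsub1_inQua (K N : nat) (g : 'I_N -> 'I_K) :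
  (forall j, exists i, g i = j) -> inQua (colsub g 1%:M : 'M[R]_(K, N)).
Proof.
move=> g_onto; have Qbasis : cols_basis (colsub g 1%:M : 'M[R]_(K, N)).
  by move=> i; exists (g i); rewrite col_colsub1.
split; [exact: cols_basis_inQ | split=> // j].
by have [i <-] := g_onto j; exists i; rewrite col_colsub1.
Qed.

Lemma equivFQ_colsub1 (M K N : nat) (F F' : 'M[R]_(M, K)) (g1 g2 : 'I_N -> 'I_K) :
  equivFQ F (colsub g1 1%:M) F' (colsub g2 1%:M) -> exists pi : 'S_K, g1 =1 pi \o g2.
Proof.
case=> pi [_ Qpi]; exists pi => i; have := Qpi (g2 i) i; rewrite !mxE eqxx.
by case: eqP => // _ /eqP; rewrite oner_eq0.
Qed.

Lemma repeated_col_not_identifiable (M K N : nat) (F : 'M[R]_(M, K)) (k l : 'I_K) :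
  (K < N)%N -> k != l -> col k F = col l F ->
  exists Q1 Q2 : 'M[R]_(K, N),
    [/\ inQua Q1, inQua Q2, F *m Q1 = F *m Q2 & ~ equivFQ F Q1 F Q2].
Proof.
move=> ltKN kl Fkl.
pose g (d : 'I_K) (i : 'I_N) := insubd d (val i).
have g_widen d j : g d (widen_ord (ltnW ltKN) j) = j.
  by apply: val_inj; rewrite val_insubd /= ltn_ord.
have g_onto d j : exists i, g d i = j by exists (widen_ord (ltnW ltKN) j).
have g_out d : g d (Ordinal ltKN) = d by apply: val_inj; rewrite val_insubd /= ltnn.
exists (colsub (g k) 1%:M), (colsub (g l) 1%:M); split; try exact: colsub1_inQua.
  rewrite !mulmx_colsub !mulmx1; apply/matrixP => s i; rewrite !mxE /g.
  have [iK|Ki] := ltnP i K.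
    by congr (F s _); apply: val_inj; rewrite !val_insubd iK.
  rewrite /insubd !insubN -?leqNgt //.
  by have /matrixP/(_ s ord0) := Fkl; rewrite !mxE.
case/equivFQ_colsub1 => pi gkl.
have pi_id j : pi j = j.
  by have := gkl (widen_ord (ltnW ltKN) j); rewrite /= !g_widen => <-.
by move: (gkl (Ordinal ltKN)); rewrite /= pi_id !g_out => /eqP; rewrite (negbTE kl).
Qed.

Lemma setcol_inFd (M K : nat) (F : 'M[R]_(M, K)) k v s0 :
  inFd F -> 0 <= v <= 1 -> (forall j, F s0 j != v) -> inFd (setcol F k v).
Proof.
move=> [Fbound Finj] v01 Fv; split=> [s j|a b F2ab].
  by rewrite mxE; case: eqP.
have F2_s0 j : (setcol F k v s0 j == v) = (j == k).
  by rewrite mxE; case: (eqVneq j k) => _; rewrite ?eqxx // (negbTE (Fv j)).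
have ak_bk : (a == k) = (b == k).
  by rewrite -(F2_s0 a) -(F2_s0 b); have /colP/(_ s0) := F2ab; rewrite !mxE => ->.
case: (eqVneq a k) ak_bk => [-> /esym/eqP -> // | ak /esym/negbT bk].
apply: Finj; apply/colP => s; have /colP/(_ s) := F2ab.
by rewrite !mxE (negbTE ak) (negbTE bk).
Qed.

Lemma setcol_not_equivFQ (M K N : nat) (F : 'M[R]_(M, K)) (Q Q' : 'M[R]_(K, N)) k v s0 :
  (forall j, F s0 j != v) -> ~ equivFQ F Q (setcol F k v) Q'.
Proof.
move=> Fv [pi [Fpi _]]; move: (Fpi s0 k).
by rewrite mxE eqxx => /esym/eqP; rewrite (negbTE (Fv _)).
Qed.

End Identifiability.

Theorem mainTheorem8 (R : realType) (M N : nat) (HM : (0 < M)%N) (HN : (0 < N)%N) :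
  (forall (K : nat) (F : 'M[R]_(M, K)),
     (2 <= K)%N -> (K < N)%N -> inF F ->
     (exists k l : 'I_K, k != l /\ col k F = col l F) ->
     exists Q1 Q2 : 'M[R]_(K, N),
       [/\ inQua Q1, inQua Q2, F *m Q1 = F *m Q2 & ~ equivFQ F Q1 F Q2])
  /\
  (forall (K : nat) (Q : 'M[R]_(K, N)),
     (2 <= K)%N -> (1 <= N)%N -> inQ Q -> ~ inQua Q ->
     cols_basis Q ->
     (exists k : 'I_K, forall i : 'I_N, col i Q != e_vec k) ->
     forall F : 'M[R]_(M, K), inFd F ->
     exists F2 : 'M[R]_(M, K),
       [/\ inFd F2, F *m Q = F2 *m Q & ~ equivFQ F Q F2 Q]).
Proof.
split=> [K F _ ltKN _ [k [l [kl Fkl]]] | K Q _ _ _ _ Qbasis [k Qk] F Fd].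
  exact: repeated_col_not_identifiable ltKN kl Fkl.
pose s0 : 'I_M := Ordinal HM.
have [v v01 Fv] := exists_unit_interval_avoid (F s0).
exists (setcol F k v); split.
- exact: setcol_inFd Fd v01 Fv.
- by rewrite mulmx_setcol // => i; apply: missing_basis_row_eq0 Qbasis Qk i.
- exact: setcol_not_equivFQ Fv.
Qed.
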